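(* For any constants $\bar z\in[0,1]$ and $\bar\alpha>0$, the set $S_{\bar z,\bar\alpha}=\{(x_1,\dots,x_n)\in[0,1]^n:\max_{i\in\mathcal V}|x_i-\bar z|<\bar\alpha\}$ is finite-time robustly reachable from $[0,1]^n$ under control protocol (C6).
   Context: Fix $n\ge3$, $\mathcal V=\{1,\dots,n\}$, confidence thresholds $r_i\in(0,1]$, belief factors $\omega_i\in(0,1)$, $\eta>0$. States $x(t)\in[0,1]^n$. Neighbor set $\mathcal N_i(t)=\{j:|x_j(t)-x_i(t)|\le r_i\}$ (contains $i$), $\Pi_{[0,1]}(y)=\min\{1,\max\{0,y\}\}$, $x_{\rm ave}(t)=\frac1n\sum_ix_i(t)$. Control protocol (C6): $x_i(t+1)=\Pi_{[0,1]}\big(\omega_ix_{\rm ave}(t)+\frac{1-\omega_i}{|\mathcal N_i(t)|}[x_i(t)+\sum_{j\in\mathcal N_i(t)\setminus\{i\}}(x_j(t)+u_{ji}(t)+b_{ji}(t))]\big)$, where for $j\in\mathcal N_i(t)\setminus\{i\}$: $\delta_i(t)\in(0,\eta)$ is a chosen parameter, $u_{ji}(t)\in[-\eta+\delta_i(t),\eta-\delta_i(t)]$ a chosen control input, $b_{ji}(t)\in[-\delta_i(t),\delta_i(t)]$ an arbitrary uncertainty; the choices may depend on $x(0),\dots,x(t)$. A set $S\subseteq[0,1]^n$ is finite-time robustly reachable from $[0,1]^n$ under the protocol if there exist constants $T>0$ and $\varepsilon\in(0,\eta)$ such that for every $x(0)\in[0,1]^n$, either $x(0)\in S$, or one can choose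 $\delta_i(t)\in[\varepsilon,\eta)$ and $u_{ji}(t)\in[-\eta+\delta_i(t),\eta-\delta_i(t)]$ ($0\le t<T$, $i\in\mathcal V$, $j\in\mathcal N_i(t)\setminus\{i\}$) guaranteeing that for arbitrary $b_{ji}(t)\in[-\delta_i(t),\delta_i(t)]$ there is $t\in[1,T]$ with $x(t)\in S$. *)

(* classical reals. Vertices are indexed 0..n-1 (nat),
   states are functions nat -> R (values at indices >= n are irrelevant). *)
From Stdlib Require Import Reals List.
Import ListNotations.
Open Scope R_scope.

Fixpoint rsum (f : nat -> R) (m : nat) : R :=
  match m with
  | O => 0
  | S k => rsum f k + f k
  end.

Definition proj01 (y : R) : R := Rmin 1 (Rmax 0 y).

Definition xave (n : nat) (x : nat -> R) : R := rsum x n / INR n.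

Definition nbrb (r : nat -> R) (x : nat -> R) (i j : nat) : bool :=
  if Rle_dec (Rabs (x j - x i)) (r i) then true else false.

Definition onbrb (r : nat -> R) (x : nat -> R) (i j : nat) : bool :=
  andb (negb (Nat.eqb j i)) (nbrb r x i j).

Definition card_nbr (n : nat) (r : nat -> R) (x : nat -> R) (i : nat) : R :=
  rsum (fun j => if nbrb r x i j then 1 else 0) n.

(* one step of protocol (C6); u j i = u_{ji}(t), b j i = b_{ji}(t) *)
Definition stepC6 (n : nat) (r w : nat -> R) (x : nat -> R)
    (u b : nat -> nat -> R) : nat -> R :=
  fun i => proj01 (w i * xave n x
             + (1 - w i) / card_nbr n r x i *
               (x i + rsum (fun j => if onbrb r x i j
                                      then x j + u j i + b j i else 0) n)).

(* A control strategy maps the history [x(0); ...; x(t)] to the choices at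
   time t:  delta h i = delta_i(t),  u h j i = u_{ji}(t).
   trajC6 ... t is the history [x(0); ...; x(t)] generated by the strategy
   u and the uncertainty sequence b t j i = b_{ji}(t). *)
Fixpoint trajC6 (n : nat) (r w : nat -> R) (x0 : nat -> R)
    (u : list (nat -> R) -> nat -> nat -> R) (b : nat -> nat -> nat -> R)
    (t : nat) : list (nat -> R) :=
  match t with
  | O => [x0]
  | S t' => let h := trajC6 n r w x0 u b t' in
            h ++ [stepC6 n r w (last h x0) (u h) (b t')]
  end.

Definition stateC6 n r w x0 u b t : nat -> R :=
  last (trajC6 n r w x0 u b t) x0.

Definition in_cube (n : nat) (x : nat -> R) : Prop :=
  forall i, (i < n)%nat -> 0 <= x i <= 1.

Definition in_S (n : nat) (zbar abar : R) (x : nat -> R) : Prop :=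
  in_cube n x /\ forall i, (i < n)%nat -> Rabs (x i - zbar) < abar.

Definition ft_robustly_reachable (n : nat) (r w : nat -> R) (eta : R)
    (S : (nat -> R) -> Prop) : Prop :=
  exists (T : nat) (eps : R), (0 < T)%nat /\ 0 < eps < eta /\
  forall x0 : nat -> R, in_cube n x0 ->
    S x0 \/
    exists (delta : list (nat -> R) -> nat -> R)
           (u : list (nat -> R) -> nat -> nat -> R),
      (forall h i, eps <= delta h i < eta) /\
      (forall h j i, - eta + delta h i <= u h j i <= eta - delta h i) /\
      forall b : nat -> nat -> nat -> R,
        (forall t i j, (t < T)%nat -> (i < n)%nat -> (j < n)%nat ->
           onbrb r (stateC6 n r w x0 u b t) i j = true ->
           - delta (trajC6 n r w x0 u b t) i <= b t j i
             <= delta (trajC6 n r w x0 u b t) i) ->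
        exists t, (1 <= t <= T)%nat /\ S (stateC6 n r w x0 u b t).

(* Steer the whole group with one common control, +2d or -2d according to
   whether agent 0 is below or above zbar, with uncertainty level d.  The
   averaging term w_i x_ave contracts the spread of the states geometrically,
   so after t0 steps all agents are within th of each other, hence mutual
   neighbours.  From then on, while the group is outside S, agent 0 stays on
   one side of zbar at distance at least abar/2, and the control moves every
   agent by at least om d/2 towards zbar at each step; as the states live in
   [0,1], this cannot last N steps.  The case above zbar is the case below
   zbar for the reflected system x |-> 1 - x. *)

From Stdlib Require Import Reals List Lra Lia Classical.
Open Scope R_scope.

Lemma rsum_ext f g m :
  (forall j, (j < m)%nat -> f j = g j) -> rsum f m = rsum g m.
Proof.
  induction m as [|m IH]; intros Hfg; simpl; [reflexivity|].
  rewrite IH by (intros j Hj; apply Hfg; lia).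
  rewrite Hfg by lia. reflexivity.
Qed.

Lemma rsum_plus f g m : rsum (fun j => f j + g j) m = rsum f m + rsum g m.
Proof. induction m as [|m IH]; simpl; [|rewrite IH]; lra. Qed.

Lemma rsum_minus f g m : rsum (fun j => f j - g j) m = rsum f m - rsum g m.
Proof. induction m as [|m IH]; simpl; [|rewrite IH]; lra. Qed.

Lemma rsum_const c m : rsum (fun _ => c) m = c * INR m.
Proof.
  induction m as [|m IH]; simpl rsum; [simpl; lra|].
  rewrite IH, S_INR. lra.
Qed.

Lemma rsum_bounds f lo hi m :
  (forall j, (j < m)%nat -> lo <= f j <= hi) -> lo * INR m <= rsum f m <= hi * INR m.
Proof.
  induction m as [|m IH]; intros Hf; [simpl; lra|]. simpl rsum.
  assert (Hm := IH (fun j Hj => Hf j ltac:(lia))). specialize (Hf m ltac:(lia)).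
  rewrite S_INR, !Rmult_plus_distr_l. lra.
Qed.

Lemma rsum_ind_bounds (P : nat -> bool) f lo hi m :
  (forall j, (j < m)%nat -> P j = true -> lo <= f j <= hi) ->
  lo * rsum (fun j => if P j then 1 else 0) m
    <= rsum (fun j => if P j then f j else 0) m
    <= hi * rsum (fun j => if P j then 1 else 0) m.
Proof.
  induction m as [|m IH]; intros Hf; simpl; [lra|].
  assert (Hm := IH (fun j Hj => Hf j ltac:(lia))).
  rewrite !Rmult_plus_distr_l.
  destruct (P m) eqn:Pm; [specialize (Hf m ltac:(lia) Pm)|]; lra.
Qed.

Lemma rsum_ind_nonneg (P : nat -> bool) m :
  0 <= rsum (fun j => if P j then 1 else 0) m.
Proof. induction m as [|m IH]; simpl; [|destruct (P m)]; lra. Qed.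

Lemma rsum_ind_ge1 (P : nat -> bool) m :
  (exists j, (j < m)%nat /\ P j = true) -> 1 <= rsum (fun j => if P j then 1 else 0) m.
Proof.
  induction m as [|m IH]; intros [j [Hj Pj]]; [lia|]. simpl.
  pose proof (rsum_ind_nonneg P m).
  destruct (Nat.eq_dec j m) as [->|Hjm]; [rewrite Pj; lra|].
  assert (1 <= rsum (fun j => if P j then 1 else 0) m)
    by (apply IH; exists j; split; [lia|exact Pj]).
  destruct (P m); lra.
Qed.

Lemma rsum_indicator_self i m :
  (i < m)%nat -> rsum (fun j => if Nat.eqb j i then 1 else 0) m = 1.
Proof.
  assert (Hbelow : forall k, (k <= i)%nat -> rsum (fun j => if Nat.eqb j i then 1 else 0) k = 0).
  { induction k as [|k IH]; intros Hk; simpl; [reflexivity|].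
    rewrite IH by lia. rewrite (proj2 (Nat.eqb_neq k i)) by lia. lra. }
  induction m as [|m IH]; intros Him; [lia|]. simpl.
  destruct (Nat.eq_dec m i) as [->|Hmi].
  - rewrite Hbelow by lia. rewrite Nat.eqb_refl. lra.
  - rewrite IH, (proj2 (Nat.eqb_neq m i)) by lia. lra.
Qed.

Lemma card_nbr_onbr n r x i :
  (i < n)%nat -> 0 <= r i ->
  card_nbr n r x i = rsum (fun j => if onbrb r x i j then 1 else 0) n + 1.
Proof.
  intros Hi Hr. unfold card_nbr.
  transitivity (rsum (fun j => if onbrb r x i j then 1 else 0) n
                + rsum (fun j => if Nat.eqb j i then 1 else 0) n);
    [| rewrite rsum_indicator_self by exact Hi; reflexivity].
  rewrite <- rsum_plus. apply rsum_ext. intros j _. unfold onbrb.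
  destruct (Nat.eqb j i) eqn:Eji; simpl.
  - apply Nat.eqb_eq in Eji as ->. unfold nbrb.
    destruct Rle_dec as [|Hnot]; [lra|].
    exfalso; apply Hnot. unfold Rminus. rewrite Rplus_opp_r, Rabs_R0. exact Hr.
  - destruct (nbrb r x i j); lra.
Qed.

Lemma Rdiv_bounds a b S N : 0 < N -> a * N <= S <= b * N -> a <= S / N <= b.
Proof.
  intros HN HS. unfold Rdiv.
  split; apply (Rmult_le_reg_r N); auto; rewrite ?Rmult_assoc, ?Rinv_l by lra; lra.
Qed.

Ltac proj01_cases := unfold proj01, Rmin, Rmax; repeat destruct Rle_dec; lra.

Lemma proj01_bounds a : 0 <= proj01 a <= 1.
Proof. proj01_cases. Qed.
Lemma proj01_le_compat a b : a <= b -> proj01 a <= proj01 b.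
Proof. intros; proj01_cases. Qed.
Lemma proj01_le_add a b : a <= b -> proj01 b <= proj01 a + (b - a).
Proof. intros; proj01_cases. Qed.
Lemma proj01_le a : 0 <= a -> proj01 a <= a.
Proof. intros; proj01_cases. Qed.
Lemma proj01_ge a : a <= 1 -> a <= proj01 a.
Proof. intros; proj01_cases. Qed.
Lemma proj01_reflect a : proj01 (1 - a) = 1 - proj01 a.
Proof. proj01_cases. Qed.

Lemma finite_min_pos (f : nat -> R) n :
  (forall i, (i < n)%nat -> 0 < f i) ->
  exists c, 0 < c /\ forall i, (i < n)%nat -> c <= f i.
Proof.
  induction n as [|n IH]; intros Hf.
  - exists 1. split; [lra | intros; lia].
  - destruct (IH (fun i Hi => Hf i ltac:(lia))) as [c [Hc Hcf]].
    exists (Rmin c (f n)). split; [apply Rmin_pos; auto|].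
    intros i Hi. destruct (Nat.eq_dec i n) as [->|Hin]; [apply Rmin_r|].
    eapply Rle_trans; [apply Rmin_l | apply Hcf; lia].
Qed.

Lemma xave_bounds n x lo hi :
  (0 < n)%nat -> (forall j, (j < n)%nat -> lo <= x j <= hi) -> lo <= xave n x <= hi.
Proof.
  intros Hn Hx. apply Rdiv_bounds; [apply lt_0_INR; lia | apply rsum_bounds; exact Hx].
Qed.

(* The witnesses are: [y] the mean state over [N_i] (agent [i] included), [q] the
   share of [N_i] taken by the other neighbours, and [z] their mean of
   [u_ji + b_ji], set to [s] when [i] has no other neighbour. *)
Lemma stepC6_convex n r w x u b i s d lo hi :
  (i < n)%nat -> 0 <= r i -> 0 <= d ->
  (forall j, u j i = s) ->
  (forall j, (j < n)%nat -> lo <= x j <= hi) ->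
  (forall j, (j < n)%nat -> onbrb r x i j = true -> - d <= b j i <= d) ->
  exists y q z,
    stepC6 n r w x u b i = proj01 (w i * xave n x + (1 - w i) * y + (1 - w i) * q * z)
    /\ lo <= y <= hi /\ s - d <= z <= s + d /\ 0 <= q <= 1
    /\ ((exists j, (j < n)%nat /\ onbrb r x i j = true) -> / 2 <= q).
Proof.
  intros Hi Hr Hd Hu Hx Hb.
  set (K := rsum (fun j => if onbrb r x i j then 1 else 0) n).
  set (Sx := rsum (fun j => if onbrb r x i j then x j else 0) n).
  set (Sz := rsum (fun j => if onbrb r x i j then s + b j i else 0) n).
  assert (HK : 0 <= K) by apply rsum_ind_nonneg.
  assert (HSx : lo * K <= Sx <= hi * K) by (apply rsum_ind_bounds; auto).
  assert (HSz : (s - d) * K <= Sz <= (s + d) * K).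
  { apply rsum_ind_bounds. intros j Hj Hij. specialize (Hb j Hj Hij). lra. }
  assert (Hsum : rsum (fun j => if onbrb r x i j then x j + u j i + b j i else 0) n
                 = Sx + Sz).
  { unfold Sx, Sz. rewrite <- rsum_plus. apply rsum_ext. intros j _.
    rewrite Hu. destruct (onbrb r x i j); lra. }
  assert (Hxi := Hx i Hi).
  exists ((x i + Sx) / (K + 1)), (K / (K + 1)),
    (if Req_EM_T K 0 then s else Sz / K).
  split; [|split; [|split; [|split]]].
  - unfold stepC6. f_equal. rewrite card_nbr_onbr, Hsum by auto. fold K.
    destruct (Req_EM_T K 0) as [HK0|HK0].
    + assert (Sz = 0) as -> by (rewrite HK0 in HSz; lra). rewrite HK0. field.
    + field. lra.
  - apply Rdiv_bounds; lra.
  - destruct (Req_EM_T K 0); [lra | apply Rdiv_bounds; lra].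
  - apply Rdiv_bounds; lra.
  - intros Hnbr. apply rsum_ind_ge1 in Hnbr. fold K in Hnbr.
    enough (/ 2 <= K / (K + 1) <= 1) by lra. apply Rdiv_bounds; lra.
Qed.

Definition spread_le (n : nat) (x : nat -> R) (l : R) : Prop :=
  exists L, forall i, (i < n)%nat -> L <= x i <= L + l.

Lemma spread_le_weaken n x l l' : l <= l' -> spread_le n x l -> spread_le n x l'.
Proof. intros Hl [L HL]. exists L. intros i Hi. specialize (HL i Hi). lra. Qed.

(* The mean-field term [w_i x_ave] pulls every agent towards the common value
   [x_ave], shrinking the spread by the factor [1 - wm]; the controls and
   noise can widen it by at most [2 k]. *)
Lemma stepC6_spread n r w x u b s d k wm l :
  (0 < n)%nat -> (forall i, (i < n)%nat -> 0 <= r i) ->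
  (forall i, (i < n)%nat -> wm <= w i < 1) -> 0 <= wm -> 0 <= d ->
  (forall i j, u j i = s) -> Rabs s + d <= k -> 0 <= l ->
  spread_le n x l ->
  (forall i j, (i < n)%nat -> (j < n)%nat -> onbrb r x i j = true -> - d <= b j i <= d) ->
  spread_le n (stepC6 n r w x u b) ((1 - wm) * l + 2 * k).
Proof.
  intros Hn Hr Hw Hwm Hd Hu Hk Hl [L Hx] Hb.
  set (A := xave n x).
  assert (HA : L <= A <= L + l) by (apply xave_bounds; auto).
  set (P := L + wm * (A - L) - k).
  set (Q := L + l - wm * (L + l - A) + k).
  exists (proj01 P). intros i Hi.
  destruct (stepC6_convex n r w x u b i s d L (L + l) Hi (Hr i Hi) Hd
              (fun j => Hu i j) Hx (fun j Hj => Hb i j Hi Hj))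
    as [y [q [z [-> [Hy [Hz [Hq _]]]]]]].
  fold A. assert (Hwi := Hw i Hi).
  assert (Hs : - Rabs s <= s <= Rabs s)
    by (split; [rewrite <- Rabs_Ropp; pose proof (Rle_abs (- s)); lra | apply Rle_abs]).
  set (p := (1 - w i) * q).
  assert (Hp : 0 <= p <= 1) by (unfold p; split; nra).
  assert (Hpz : - k <= p * z <= k) by nra.
  replace ((1 - w i) * q * z) with (p * z) by (unfold p; ring).
  assert (HP : P <= w i * A + (1 - w i) * y + p * z) by (unfold P; nra).
  assert (HQ : w i * A + (1 - w i) * y + p * z <= Q) by (unfold Q; nra).
  split; [apply proj01_le_compat; exact HP|].
  eapply Rle_trans; [apply proj01_le_compat, HQ|].
  eapply Rle_trans; [apply (proj01_le_add P Q); lra|].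
  unfold P, Q. lra.
Qed.

Lemma onbr_exists n r x i l :
  (2 <= n)%nat -> (i < n)%nat -> spread_le n x l -> l <= r i ->
  exists j, (j < n)%nat /\ onbrb r x i j = true.
Proof.
  intros Hn Hi [L Hx] Hl.
  assert (Hj : exists j, (j < n)%nat /\ j <> i)
    by (destruct i; [exists 1%nat | exists 0%nat]; lia).
  destruct Hj as [j [Hjn Hji]]. exists j. split; [exact Hjn|].
  unfold onbrb, nbrb. rewrite (proj2 (Nat.eqb_neq j i) Hji).
  destruct Rle_dec as [|Hnot]; [reflexivity|]. exfalso; apply Hnot.
  pose proof (Hx i Hi). pose proof (Hx j Hjn).
  apply Rabs_le. lra.
Qed.

(* Since [i] has another neighbour, at least half of its local average carries
   the control [g], with weight [1 - w_i >= om]. *)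
Lemma stepC6_climb n r w x u b i g d om lo hi :
  (i < n)%nat -> 0 <= r i -> 0 < w i < 1 -> 0 <= om <= 1 - w i -> 0 <= d <= g - d ->
  (forall j, u j i = g) ->
  (forall j, (j < n)%nat -> lo <= x j <= hi) ->
  (exists j, (j < n)%nat /\ onbrb r x i j = true) ->
  (forall j, (j < n)%nat -> onbrb r x i j = true -> - d <= b j i <= d) ->
  proj01 (lo + om * (g - d) / 2) <= stepC6 n r w x u b i <= proj01 (hi + (g + d)).
Proof.
  intros Hi Hr Hw Hom Hd Hu Hx Hnbr Hb.
  destruct (stepC6_convex n r w x u b i g d lo hi Hi Hr ltac:(lra) Hu Hx Hb)
    as [y [q [z [-> [Hy [Hz [Hq Hhalf]]]]]]].
  specialize (Hhalf Hnbr).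
  assert (HA : lo <= xave n x <= hi) by (apply xave_bounds; auto; lia).
  set (A := xave n x) in *.
  assert (H1 : 0 <= w i * (A - lo)) by (apply Rmult_le_pos; lra).
  assert (H2 : 0 <= (1 - w i) * (y - lo)) by (apply Rmult_le_pos; lra).
  assert (H3 : 0 <= w i * (hi - A)) by (apply Rmult_le_pos; lra).
  assert (H4 : 0 <= (1 - w i) * (hi - y)) by (apply Rmult_le_pos; lra).
  assert (H5 : om * / 2 <= (1 - w i) * q) by (apply Rmult_le_compat; lra).
  assert (H6 : om * / 2 * (g - d) <= (1 - w i) * q * z) by (apply Rmult_le_compat; nra).
  assert (H7 : (1 - w i) * q <= 1) by nra.
  assert (H8 : (1 - w i) * q * z <= g + d) by nra.
  split; apply proj01_le_compat; lra.
Qed.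

Lemma nbrb_reflect r x i j : nbrb r (fun k => 1 - x k) i j = nbrb r x i j.
Proof.
  unfold nbrb. replace (1 - x j - (1 - x i)) with (x i - x j) by ring.
  rewrite Rabs_minus_sym. reflexivity.
Qed.

Lemma onbrb_reflect r x i j : onbrb r (fun k => 1 - x k) i j = onbrb r x i j.
Proof. unfold onbrb. rewrite nbrb_reflect. reflexivity. Qed.

Lemma card_nbr_reflect n r x i : card_nbr n r (fun k => 1 - x k) i = card_nbr n r x i.
Proof. apply rsum_ext. intros j _. rewrite nbrb_reflect. reflexivity. Qed.

Lemma xave_reflect n x : (0 < n)%nat -> xave n (fun k => 1 - x k) = 1 - xave n x.
Proof.
  intros Hn. assert (0 < INR n) by (apply lt_0_INR; exact Hn).
  unfold xave. rewrite rsum_minus, rsum_const. field. lra.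
Qed.

Lemma stepC6_reflect n r w x u b i :
  (i < n)%nat -> 0 <= r i ->
  stepC6 n r w (fun k => 1 - x k) (fun j k => - u j k) (fun j k => - b j k) i
  = 1 - stepC6 n r w x u b i.
Proof.
  intros Hi Hr. unfold stepC6. rewrite <- proj01_reflect. f_equal.
  set (K := rsum (fun j => if onbrb r x i j then 1 else 0) n).
  assert (HK : 0 <= K) by apply rsum_ind_nonneg.
  assert (Hsum :
    rsum (fun j => if onbrb r (fun k => 1 - x k) i j then 1 - x j + - u j i + - b j i else 0) n
    = K - rsum (fun j => if onbrb r x i j then x j + u j i + b j i else 0) n).
  { unfold K. rewrite <- rsum_minus. apply rsum_ext. intros j _.
    rewrite onbrb_reflect. destruct (onbrb r x i j); ring. }
  rewrite Hsum, card_nbr_reflect, card_nbr_onbr, xave_reflect by (auto; lia).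
  fold K. field. lra.
Qed.

Lemma stateC6_S n r w x0 u b t :
  stateC6 n r w x0 u b (S t)
  = stepC6 n r w (stateC6 n r w x0 u b t) (u (trajC6 n r w x0 u b t)) (b t).
Proof. unfold stateC6 at 1. cbn [trajC6]. rewrite last_last. reflexivity. Qed.

Lemma in_cube_reflect n x : in_cube n x -> in_cube n (fun k => 1 - x k).
Proof. intros Hx i Hi. specialize (Hx i Hi). lra. Qed.

Lemma spread_le_reflect n x l : spread_le n x l -> spread_le n (fun k => 1 - x k) l.
Proof. intros [L HL]. exists (1 - L - l). intros i Hi. specialize (HL i Hi). lra. Qed.

Lemma in_S_of_spread n zbar a x l :
  (0 < n)%nat -> in_cube n x -> spread_le n x l -> Rabs (x 0%nat - zbar) + l < a ->
  in_S n zbar a x.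
Proof.
  intros Hn Hcube [L HL] Hclose. split; [exact Hcube|]. intros i Hi.
  assert (Hx0 : Rabs (x 0%nat - zbar) < a - l) by lra.
  apply Rabs_def2 in Hx0. pose proof (HL i Hi). pose proof (HL 0%nat Hn).
  apply Rabs_def1; lra.
Qed.

Definition c6_run (n : nat) (r w : nat -> R) (d : R) (T : nat)
    (X : nat -> nat -> R) (U B : nat -> nat -> nat -> R) : Prop :=
  (forall t i, (t < T)%nat -> (i < n)%nat -> X (S t) i = stepC6 n r w (X t) (U t) (B t) i) /\
  (forall t i j, (t < T)%nat -> (i < n)%nat -> (j < n)%nat ->
     onbrb r (X t) i j = true -> - d <= B t j i <= d).

Lemma stateC6_c6_run n r w x0 u b d T :
  (forall t i j, (t < T)%nat -> (i < n)%nat -> (j < n)%nat ->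
     onbrb r (stateC6 n r w x0 u b t) i j = true -> - d <= b t j i <= d) ->
  c6_run n r w d T (stateC6 n r w x0 u b) (fun t => u (trajC6 n r w x0 u b t)) b.
Proof. intros Hb. split; [intros; rewrite stateC6_S; reflexivity | exact Hb]. Qed.

Section Runs.

Variables (n : nat) (r w : nat -> R).
Hypothesis Hn : (2 <= n)%nat.
Hypothesis Hr : forall i, (i < n)%nat -> 0 <= r i.
Hypothesis Hw : forall i, (i < n)%nat -> 0 < w i < 1.

Lemma c6_run_in_cube d T X U B :
  c6_run n r w d T X U B -> in_cube n (X 0%nat) ->
  forall t, (t <= T)%nat -> in_cube n (X t).
Proof.
  intros [HX _] H0 [|t] Ht i Hi; [exact (H0 i Hi)|].
  rewrite HX by lia. apply proj01_bounds.
Qed.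

Lemma c6_run_reflect d T X U B :
  c6_run n r w d T X U B ->
  c6_run n r w d T (fun t k => 1 - X t k) (fun t j k => - U t j k) (fun t j k => - B t j k).
Proof.
  intros [HX HB]. split.
  - intros t i Ht Hi. cbv beta. rewrite stepC6_reflect, HX by auto. reflexivity.
  - intros t i j Ht Hi Hj Hij. rewrite onbrb_reflect in Hij.
    specialize (HB t i j Ht Hi Hj Hij). lra.
Qed.

Lemma c6_run_spread d T X U B wm k l0 :
  c6_run n r w d T X U B ->
  0 < wm -> (forall i, (i < n)%nat -> wm <= w i) -> 0 <= d -> 0 <= k -> 0 <= l0 ->
  (forall t, (t < T)%nat -> exists s, Rabs s + d <= k /\ forall i j, U t j i = s) ->
  spread_le n (X 0%nat) l0 ->
  forall t, (t <= T)%nat -> spread_le n (X t) ((1 - wm) ^ t * l0 + 2 * k / wm).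
Proof.
  intros [HX HB] Hwm Hwm_le Hd Hk Hl0 HU H0.
  assert (Hwm1 : wm < 1)
    by (pose proof (Hwm_le 0%nat ltac:(lia)); pose proof (Hw 0%nat ltac:(lia)); lra).
  assert (Hkwm : 0 <= 2 * k / wm) by (apply Rmult_le_pos; [lra | left; apply Rinv_0_lt_compat, Hwm]).
  induction t as [|t IH]; intros Ht.
  - eapply spread_le_weaken; [|exact H0]. simpl. lra.
  - destruct (HU t ltac:(lia)) as [s [Hs Hu]].
    assert (Hpow : 0 <= (1 - wm) ^ t) by (apply pow_le; lra).
    assert (Hstep := stepC6_spread n r w (X t) (U t) (B t) s d k wm
      ((1 - wm) ^ t * l0 + 2 * k / wm) ltac:(lia) Hr
      (fun i Hi => conj (Hwm_le i Hi) (proj2 (Hw i Hi))) ltac:(lra) Hd Hu Hs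
      ltac:(nra) (IH ltac:(lia)) (fun i j => HB t i j ltac:(lia))).
    destruct Hstep as [L HL]. exists L. intros i Hi. rewrite HX by lia.
    replace ((1 - wm) ^ S t * l0 + 2 * k / wm)
      with ((1 - wm) * ((1 - wm) ^ t * l0 + 2 * k / wm) + 2 * k) by (simpl; field; lra).
    apply HL, Hi.
Qed.

(* While agent [0] stays below [zbar - a], the controls push the whole group up
   by [om d / 2] per step; as the states stay in [0,1], this cannot last long. *)
Lemma c6_run_climb d X U B om th zbar a t0 N :
  c6_run n r w d (t0 + N) X U B ->
  0 < d -> 0 < om -> (forall i, (i < n)%nat -> om <= 1 - w i) ->
  0 <= th -> (forall i, (i < n)%nat -> th <= r i) -> th + 3 * d < a -> zbar <= 1 ->
  (forall t, (t0 <= t <= t0 + N)%nat ->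
     in_cube n (X t) /\ spread_le n (X t) th /\ a <= Rabs (X t 0%nat - zbar)) ->
  (forall t, (t0 <= t < t0 + N)%nat -> X t 0%nat < zbar -> forall i j, U t j i = 2 * d) ->
  X t0 0%nat < zbar ->
  INR N * (om * d / 2) < 1.
Proof.
  intros [HX HB] Hd Hom Hom_le Hth Hth_r Ha Hz Hstate HU Hstart.
  set (mu := om * d / 2).
  assert (Hom1 : om < 1)
    by (pose proof (Hom_le 0%nat ltac:(lia)); pose proof (Hw 0%nat ltac:(lia)); lra).
  assert (Hmu : mu <= d / 2) by (unfold mu; nra).
  assert (Hbelow : forall t, (t0 <= t <= t0 + N)%nat -> X t 0%nat < zbar ->
                     X t 0%nat <= zbar - a).
  { intros t Ht Hlt. destruct (Hstate t Ht) as [_ [_ Hgap]].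
    rewrite Rabs_left in Hgap by lra. lra. }
  assert (Hinv : forall k, (k <= N)%nat ->
            X (t0 + k)%nat 0%nat <= zbar - a
            /\ forall i, (i < n)%nat -> INR k * mu <= X (t0 + k)%nat i).
  { induction k as [|k IH]; intros Hk.
    - rewrite Nat.add_0_r. split; [apply Hbelow; [lia | exact Hstart]|].
      intros i Hi. destruct (Hstate t0 ltac:(lia)) as [Hcube _].
      pose proof (Hcube i Hi). simpl. lra.
    - destruct (IH ltac:(lia)) as [Hx0 Hlo].
      destruct (Hstate (t0 + k)%nat ltac:(lia)) as [Hcube [[L HL] _]].
      assert (Hstep : forall i, (i < n)%nat ->
        proj01 (INR k * mu + om * (2 * d - d) / 2) <= X (t0 + S k)%nat i
        <= proj01 (L + th + (2 * d + d))).
      { intros i Hi. rewrite <- plus_n_Sm, HX by lia.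
        apply (stepC6_climb n r w _ _ _ i (2 * d) d om).
        - exact Hi.
        - apply Hr, Hi.
        - apply Hw, Hi.
        - pose proof (Hom_le i Hi). lra.
        - lra.
        - intros j. apply HU; [lia | lra].
        - intros j Hj. split; [apply Hlo, Hj | apply HL, Hj].
        - apply (onbr_exists n r _ i th); auto. exists L. exact HL.
        - intros j Hj. apply HB; auto. lia. }
      replace (om * (2 * d - d) / 2) with mu in Hstep by (unfold mu; field).
      pose proof (HL 0%nat ltac:(lia)). pose proof (Hcube 0%nat ltac:(lia)).
      pose proof (Hlo 0%nat ltac:(lia)).
      assert (Hx0' : X (t0 + S k)%nat 0%nat < zbar).
      { destruct (Hstep 0%nat ltac:(lia)) as [_ Hup].
        eapply Rle_lt_trans; [exact Hup|].
        eapply Rle_lt_trans; [apply proj01_le; lra | lra]. }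
      split; [apply Hbelow; [lia | exact Hx0']|].
      intros i Hi. destruct (Hstep i Hi) as [Hdown _].
      rewrite S_INR, Rmult_plus_distr_r, Rmult_1_l.
      eapply Rle_trans; [|exact Hdown]. apply proj01_ge. lra. }
  destruct (Hinv N (le_n N)) as [HxN HloN].
  pose proof (HloN 0%nat ltac:(lia)). fold mu. lra.
Qed.

Lemma sign_control_reaches d X U B wm om th zbar abar t0 N :
  c6_run n r w d (t0 + N) X U B -> in_cube n (X 0%nat) ->
  0 < wm -> (forall i, (i < n)%nat -> wm <= w i) ->
  0 < om -> (forall i, (i < n)%nat -> om <= 1 - w i) ->
  0 < th -> (forall i, (i < n)%nat -> th <= r i) -> th <= abar / 4 ->
  0 < d -> 12 * d <= wm * th ->
  (forall t, (t0 <= t)%nat -> (1 - wm) ^ t < th / 2) ->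
  1 < INR N * (om * d / 2) -> 0 <= zbar <= 1 ->
  (forall t i j, U t j i = if Rlt_dec (X t 0%nat) zbar then 2 * d else - (2 * d)) ->
  exists t, (t0 <= t <= t0 + N)%nat /\ in_S n zbar abar (X t).
Proof.
  intros Hrun HX0 Hwm Hwm_le Hom Hom_le Hth Hth_r Hth_a Hd Hdth Hpow HN Hz HU.
  destruct (classic (exists t, (t0 <= t <= t0 + N)%nat /\ in_S n zbar abar (X t)))
    as [Hreach|Hnot]; [exact Hreach | exfalso].
  assert (Hwm1 : wm <= 1)
    by (pose proof (Hwm_le 0%nat ltac:(lia)); pose proof (Hw 0%nat ltac:(lia)); lra).
  assert (Hcube := c6_run_in_cube d _ X U B Hrun HX0).
  assert (Hspread : forall t, (t0 <= t <= t0 + N)%nat -> spread_le n (X t) th).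
  { intros t Ht.
    assert (Hctrl : 2 * (3 * d) / wm <= th / 2) by (apply (Rdiv_bounds 0); nra).
    pose proof (Hpow t ltac:(lia)).
    eapply spread_le_weaken;
      [| apply (c6_run_spread d (t0 + N) X U B wm (3 * d) 1 Hrun); auto; try lra].
    - lra.
    - intros s _. exists (if Rlt_dec (X s 0%nat) zbar then 2 * d else - (2 * d)).
      split; [|intros; apply HU].
      destruct Rlt_dec; [rewrite Rabs_right | rewrite Rabs_left]; lra.
    - exists 0. intros i Hi. pose proof (HX0 i Hi). lra.
    - lia. }
  assert (Hstate : forall t, (t0 <= t <= t0 + N)%nat ->
            in_cube n (X t) /\ spread_le n (X t) th /\ abar / 2 <= Rabs (X t 0%nat - zbar)).
  { intros t Ht. split; [apply Hcube; lia|]. split; [apply Hspread, Ht|].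
    apply Rnot_lt_le. intros Hclose. apply Hnot. exists t. split; [exact Ht|].
    apply (in_S_of_spread n zbar abar (X t) th); [lia | apply Hcube; lia | apply Hspread, Ht | lra]. }
  assert (Hmargin : th + 3 * d < abar / 2) by nra.
  enough (INR N * (om * d / 2) < 1) by lra.
  destruct (Rlt_le_dec (X t0 0%nat) zbar) as [Hlow|Hhigh].
  - apply (c6_run_climb d X U B om th zbar (abar / 2) t0 N); auto; try lra.
    intros t _ Hlt i j. rewrite HU. destruct Rlt_dec; [reflexivity | contradiction].
  - assert (Hgt : zbar < X t0 0%nat).
    { destruct Hhigh as [Hgt | Heq]; [exact Hgt|].
      destruct (Hstate t0 ltac:(lia)) as [_ [_ Hgap]].
      rewrite Heq, Rminus_diag, Rabs_R0 in Hgap. lra. }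
    apply (c6_run_climb d (fun t k => 1 - X t k) (fun t j k => - U t j k)
             (fun t j k => - B t j k) om th (1 - zbar) (abar / 2) t0 N);
      auto; try lra.
    + apply c6_run_reflect, Hrun.
    + intros t Ht. destruct (Hstate t Ht) as [Hc [Hs Hgap]].
      split; [apply in_cube_reflect, Hc|]. split; [apply spread_le_reflect, Hs|].
      replace (1 - X t 0%nat - (1 - zbar)) with (- (X t 0%nat - zbar)) by ring.
      rewrite Rabs_Ropp. exact Hgap.
    + intros t _ Hlt i j. rewrite HU. destruct Rlt_dec; lra.
Qed.

End Runs.

Theorem lemma7 (n : nat) (r w : nat -> R) (eta : R)
  (Hn : (3 <= n)%nat)
  (Hr : forall i, (i < n)%nat -> 0 < r i <= 1)
  (Hw : forall i, (i < n)%nat -> 0 < w i < 1)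
  (Heta : 0 < eta)
  (zbar abar : R) (Hz : 0 <= zbar <= 1) (Ha : 0 < abar) :
  ft_robustly_reachable n r w eta (in_S n zbar abar).
Proof.
  destruct (finite_min_pos w n (fun i Hi => proj1 (Hw i Hi))) as [wm [Hwm Hwm_le]].
  destruct (finite_min_pos (fun i => 1 - w i) n (fun i Hi => ltac:(pose proof (Hw i Hi); lra)))
    as [om [Hom Hom_le]].
  destruct (finite_min_pos r n (fun i Hi => proj1 (Hr i Hi))) as [rho [Hrho Hrho_le]].
  assert (Hwm1 : wm < 1)
    by (pose proof (Hwm_le 0%nat ltac:(lia)); pose proof (Hw 0%nat ltac:(lia)); lra).
  set (th := Rmin rho (abar / 4)).
  assert (Hth : 0 < th) by (apply Rmin_pos; lra).
  assert (Hth_rho : th <= rho) by apply Rmin_l.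
  set (d := Rmin (eta / 4) (wm * th / 12)).
  assert (Hd : 0 < d) by (apply Rmin_pos; nra).
  assert (Hd_eta : d <= eta / 4) by apply Rmin_l.
  assert (Hd_th : d <= wm * th / 12) by apply Rmin_r.
  destruct (pow_lt_1_zero (1 - wm) ltac:(rewrite Rabs_right; lra) (th / 2) ltac:(lra))
    as [t0 Hpow].
  destruct (INR_unbounded (/ (om * d / 2))) as [N HN].
  apply (Rmult_lt_compat_r (om * d / 2)) in HN; [rewrite Rinv_l in HN|]; try nra.
  exists (S t0 + N)%nat, d. split; [lia | split; [lra|]].
  intros x0 Hx0. destruct (classic (in_S n zbar abar x0)) as [HS|HS]; [left; exact HS | right].
  set (u := fun (h : list (nat -> R)) (j i : nat) =>
              if Rlt_dec (last h x0 0%nat) zbar then 2 * d else - (2 * d)).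
  exists (fun _ _ => d), u.
  split; [intros; lra | split; [intros; unfold u; destruct Rlt_dec; lra|]].
  intros b Hb.
  destruct (sign_control_reaches n r w ltac:(lia) (fun i Hi => Rlt_le _ _ (proj1 (Hr i Hi))) Hw
              d (stateC6 n r w x0 u b) (fun t => u (trajC6 n r w x0 u b t)) b
              wm om th zbar abar (S t0) N (stateC6_c6_run n r w x0 u b d _ Hb) Hx0
              Hwm Hwm_le Hom Hom_le Hth)
    as [t [Ht Hreach]]; try lra; auto.
  - intros i Hi. pose proof (Hrho_le i Hi). lra.
  - apply Rmin_r.
  - intros t Ht. eapply Rle_lt_trans; [apply Rle_abs | apply Hpow; lia].
  - exists t. split; [lia | exact Hreach].
Qed.
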